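(* Let $k\geq3$, $A=\{0,1,\dots,k-1\}$, $N=k-1$ and let $T\colon A^{N^2}\to A$ be given by $T(x_{1,1},\dots,x_{1,N},\dots,x_{N,1},\dots,x_{N,N})=1$ if $x_{i,j}=i$ for all $i,j$ or $x_{i,j}=j$ for all $i,j$, and $0$ otherwise. Then for all $1\leq n<k-1$, \[\{T\}^{**(n)}=\{T\}^{*(1)*(n)}=J_n(A)\cup\{c^n_0\},\] where $c^n_0$ is the $n$-ary constant zero function and $J_n(A)$ the set of $n$-ary projections.
   Context: An $m$-ary $g$ commutes with an $n$-ary $h$ if $g\bigl((h((x_{ij})_{j}))_{i}\bigr)=h\bigl((g((x_{ij})_{i}))_{j}\bigr)$ for all $(x_{ij})\in A^{m\times n}$. For a set $F$ of finitary operations on $A$ (positive arity), $F^*$ is the set of all such operations commuting with every member of $F$, and $F^{(n)}$ the set of $n$-ary members of $F$. Superscripts apply from left to right, e.g. $\{T\}^{*(1)*(n)}=(((\{T\}^* )^{(1)})^* )^{(n)}$ and $\{T\}^{**(n)}=((\{T\}^* )^* )^{(n)}$. *)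

From mathcomp Require Import all_boot.
Set Implicit Arguments. Unset Strict Implicit. Unset Printing Implicit Defensive.

Definition op (A : Type) (m : nat) := ('I_m -> A) -> A.

Definition fop (A : Type) := {m : nat & op A m}.

Definition opset (A : Type) := fop A -> Prop.

Definition commutes (A : Type) (m n : nat) (g : op A m) (h : op A n) : Prop :=
  forall x : 'I_m -> 'I_n -> A,
    g (fun i => h (fun j => x i j)) = h (fun j => g (fun i => x i j)).

Definition centralizer (A : Type) (F : opset A) : opset A :=
  fun p => 0 < projT1 p /\
    forall q : fop A, F q -> commutes (projT2 p) (projT2 q).

Definition arity_part (A : Type) (n : nat) (F : opset A) : opset A :=
  fun p => projT1 p = n /\ F p.

Definition singleton_op (A : Type) (m : nat) (f : op A m) : opset A :=
  fun p => p = existT (fun m => op A m) m f.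

Definition opset_eq (A : Type) (F G : opset A) : Prop := forall p, F p <-> G p.

Definition proj_or_const0 (k n : nat) : opset 'I_k :=
  fun p => projT1 p = n /\
    ((exists i : 'I_(projT1 p), forall x, projT2 p x = x i) \/
     (forall x, nat_of_ord (projT2 p x) = 0)).

(* The operation T of arity N^2, N = k-1, on A = {0,...,k-1}.
   Argument index r*N + c (0-based r, c < N) holds x_{r+1,c+1}.
   T x = 1 if x_{i,j} = i for all i,j or x_{i,j} = j for all i,j, else 0. *)
Definition T_op (k : nat) (hk : 2 < k) : op 'I_k ((k-1) * (k-1)) :=
  fun x =>
    if [forall t : 'I_((k-1) * (k-1)), nat_of_ord (x t) == t %/ (k-1) + 1]
       || [forall t : 'I_((k-1) * (k-1)), nat_of_ord (x t) == t %% (k-1) + 1]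
    then Ordinal (ltnW hk : 1 < k)
    else Ordinal (ltnW (ltnW hk) : 0 < k).
Arguments proj_or_const0 : clear implicits.

From mathcomp Require Import all_boot zify.
From Stdlib Require Import FunctionalExtensionality.

Set Implicit Arguments. Unset Strict Implicit. Unset Printing Implicit Defensive.

(* Projections commute with everything, and a constant c commutes with every
   operation fixing the constant tuple c.  Every member of {T}^* fixes the
   zero tuple because T vanishes on constant tuples; hence
   J_n(A) ∪ {c_0} ⊆ {T}^**(n) ⊆ {T}^*(1)*(n).
   Conversely, T is nonzero only on tuples containing all k-1 nonzero values.
   So for x ∈ A^n with n < k-1, the unary map u_x sending i+2 to x_i and every
   other value to 0 commutes with T, both sides being 0.  An n-ary g commuting
   with every u_x satisfies g(x) = u_x(g(2, ..., n+1)), so g is a projection or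
   the constant 0 according to the value of g(2, ..., n+1). *)

Section Commutation.

Variable A : Type.

Lemma centralizer_antitone (F G : opset A) :
  (forall p, F p -> G p) -> forall p, centralizer G p -> centralizer F p.
Proof. by move=> FG p [p_gt0 Gp]; split=> // q /FG; apply: Gp. Qed.

Lemma commutes_proj m n (i : 'I_m) (h : op A n) : commutes (fun x => x i) h.
Proof. by []. Qed.

Lemma commutes_const m n (c : A) (h : op A n) :
  h (fun _ => c) = c -> commutes (fun _ : 'I_m -> A => c) h.
Proof. by move=> hc x; rewrite hc. Qed.

Lemma commutes_fix_const m n (h : op A m) (f : op A n) (d : A) :
  commutes h f -> (forall c, f (fun _ => c) = d) -> h (fun _ => d) = d.
Proof. by move=> hf f_const; have := hf (fun _ _ => d); rewrite !f_const. Qed.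

Lemma bicentralizer_sub_arity_part n m (F : opset A) (p : fop A) :
  arity_part n (centralizer (centralizer F)) p ->
  arity_part n (centralizer (arity_part m (centralizer F))) p.
Proof. by case=> arity_p cent_p; split=> //; apply: centralizer_antitone cent_p => q []. Qed.

End Commutation.

Section OperationT.

Variables (k : nat) (hk : 2 < k).

Definition zero : 'I_k := Ordinal (ltnW (ltnW hk)).

Lemma T_op_lt2 (y : 'I_((k-1) * (k-1)) -> 'I_k) : T_op hk y < 2.
Proof. by rewrite /T_op; case: ifP. Qed.

Lemma T_op_codom (y : 'I_((k-1) * (k-1)) -> 'I_k) :
  T_op hk y != zero -> forall a : 'I_k, a != zero -> a \in codom y.
Proof.
move=> Ty_nz a; rewrite -(inj_eq val_inj) /= -lt0n => a_gt0.
have N_gt0 : 0 < k - 1 by rewrite subn_gt0 ltnW // ltnW.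
have a1_lt : a - 1 < k - 1 by have := ltn_ord a; lia.
have sq_ge : k - 1 <= (k - 1) * (k - 1) by rewrite leq_pmull.
have a1N_lt : (a - 1) * (k - 1) < (k - 1) * (k - 1) by rewrite ltn_mul2r a1_lt N_gt0.
move: Ty_nz; rewrite /T_op; case: ifP => [/orP[] /forallP y_eq _ | _] //.
- apply/codomP; exists (Ordinal a1N_lt); apply: ord_inj.
  by rewrite (eqP (y_eq _)) /= mulnK // subnK.
- apply/codomP; exists (Ordinal (leq_trans a1_lt sq_ge)); apply: ord_inj.
  by rewrite (eqP (y_eq _)) /= modn_small // subnK.
Qed.

Lemma T_op_const (c : 'I_k) : T_op hk (fun _ => c) = zero.
Proof.
apply/eqP; apply: contraT => /T_op_codom c_all.
have /codomP[_ one_c] := c_all (Ordinal (ltnW hk)) isT.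
have /codomP[_ two_c] := c_all (Ordinal hk) isT.
by move: (congr1 val (etrans one_c (esym two_c))).
Qed.

Lemma T_op_small_range (S : {set 'I_k}) (y : 'I_((k-1) * (k-1)) -> 'I_k) :
  #|S| < k - 1 -> (forall t, y t = zero \/ y t \in S) -> T_op hk y = zero.
Proof.
move=> S_small y_in; apply/eqP; apply: contraT => /T_op_codom y_all.
have : [set~ zero] \subset S.
  apply/subsetP => a; rewrite !inE => a_nz.
  have /codomP[t a_eq] := y_all a a_nz.
  by case: (y_in t) => [y0|]; [move: a_nz; rewrite a_eq y0 eqxx | rewrite a_eq].
by move/subset_leq_card; rewrite cardsC1 card_ord -subn1 leqNgt S_small.
Qed.

(* The offset 2 makes [shift_arg x] vanish on 0 and 1, the only values of T. *)
Definition shift_arg n (x : 'I_n -> 'I_k) (a : 'I_k) : 'I_k :=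
  if 2 <= a then (if insub (a - 2) is Some i then x i else zero) else zero.

Definition shift_op n (x : 'I_n -> 'I_k) : op 'I_k 1 := fun a => shift_arg x (a ord0).

Lemma shift_arg_lt2 n (x : 'I_n -> 'I_k) (a : 'I_k) : a < 2 -> shift_arg x a = zero.
Proof. by rewrite /shift_arg ltnNge => /negbTE ->. Qed.

Lemma shift_arg_range n (x : 'I_n -> 'I_k) (a : 'I_k) :
  shift_arg x a = zero \/ shift_arg x a \in [set x i | i : 'I_n].
Proof.
rewrite /shift_arg; case: ifP => _; last by left.
by case: insubP => [i _ _|_]; [right; apply: imset_f | left].
Qed.

Lemma shift_arg_index n (x : 'I_n -> 'I_k) (i : 'I_n) (lt_ik : i + 2 < k) :
  shift_arg x (Ordinal lt_ik) = x i.
Proof.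
rewrite /shift_arg /= leq_addl addnK.
by case: insubP => [j _ /val_inj -> | ]; rewrite ?ltn_ord.
Qed.

Lemma shift_op_centralizes_T n (x : 'I_n -> 'I_k) : n < k - 1 ->
  centralizer (singleton_op (T_op hk)) (existT _ 1 (shift_op x)).
Proof.
move=> n_lt; split=> // _ -> y /=; rewrite /shift_op shift_arg_lt2 ?T_op_lt2 //.
apply/esym/(T_op_small_range (S := [set x i | i : 'I_n])) => [|t].
  by rewrite (leq_ltn_trans (leq_imset_card _ _)) // cardT size_enum_ord.
exact: shift_arg_range.
Qed.

Lemma commutes_shift_op_proj_or_const0 n (g : op 'I_k n) : n < k - 1 ->
  (forall x : 'I_n -> 'I_k, commutes g (shift_op x)) ->
  proj_or_const0 k n (existT _ n g).
Proof.
move=> n_lt g_comm; have lt_ik (i : 'I_n) : i + 2 < k.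
  by have := ltn_ord i; lia.
pose e i := Ordinal (lt_ik i).
have g_shift x : g x = shift_arg x (g e).
  rewrite -[RHS](g_comm x (fun i _ => e i)); congr g.
  by apply: functional_extensionality => i; rewrite /shift_op shift_arg_index.
split=> //=; rewrite /shift_arg in g_shift.
case: (2 <= g e) g_shift => g_shift; last by right=> x; rewrite g_shift.
case: (insub (g e - 2)) g_shift => [i|] g_shift; last by right=> x; rewrite g_shift.
by left; exists i.
Qed.

Lemma unary_bicentralizer_proj_or_const0 n (p : fop 'I_k) : n < k - 1 ->
  arity_part n (centralizer (arity_part 1 (centralizer (singleton_op (T_op hk))))) p ->
  proj_or_const0 k n p.
Proof.
case: p => m g n_lt [/= arity_g [_ g_comm]]; subst m.
apply: (commutes_shift_op_proj_or_const0 n_lt) => x.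
exact: (g_comm (existT _ 1 (shift_op x)) (conj (erefl 1) (shift_op_centralizes_T x n_lt))).
Qed.

Lemma proj_or_const0_bicentralizer n (p : fop 'I_k) : 0 < n ->
  proj_or_const0 k n p ->
  arity_part n (centralizer (centralizer (singleton_op (T_op hk)))) p.
Proof.
case: p => m g n_gt0 [/= m_eq g_cases]; split=> //; split; first by rewrite /= m_eq.
move=> [m' h] [_ /(_ _ (erefl _)) hT] /=.
case: g_cases => [[i g_i] | g_0].
  by rewrite (functional_extensionality _ _ g_i); apply: commutes_proj.
have -> : g = fun _ => zero.
  by apply: functional_extensionality => x; apply: val_inj; rewrite /= g_0.
by apply/commutes_const/(commutes_fix_const hT); apply: T_op_const.
Qed.

End OperationT.

Theorem lemma3p6 (k : nat) (hk : 2 < k) (n : nat) :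
  1 <= n -> n < k - 1 ->
  let TT := singleton_op (T_op hk) in
  opset_eq (arity_part n (centralizer (centralizer TT))) (proj_or_const0 k n) /\
  opset_eq (arity_part n (centralizer (arity_part 1 (centralizer TT))))
           (proj_or_const0 k n).
Proof.
move=> n_gt0 n_lt TT; split=> p; split.
- by move/bicentralizer_sub_arity_part/(unary_bicentralizer_proj_or_const0 n_lt).
- exact: proj_or_const0_bicentralizer.
- exact: unary_bicentralizer_proj_or_const0.
- by move/(proj_or_const0_bicentralizer hk n_gt0)/bicentralizer_sub_arity_part.
Qed.
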